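(* Let $n\ge3$. For $i\ge -1$ let $\mathfrak{M}_i$ be the free $\mathbb{Z}$-module spanned by $\mathcal{N}_i$. Then each $\mathfrak{M}_i$ is a homogeneous subring of $\mathfrak{L}(n)$, and for every $i\ge 0$, \[\mathfrak{M}_i=N_{\mathfrak{L}(n)}(\mathfrak{M}_{i-1})=\mathfrak{N}_i.\]
   Context: Fix an integer $n\ge 3$. A partition is a sequence $\Lambda=(\lambda_j)_{j\ge1}$ of non-negative integers with finite support; $\mathrm{wt}(\Lambda)=\sum_j j\lambda_j$; $\mathrm{Part}(k)$ is the set of partitions with $\lambda_j=0$ for $j>k$. Write $x^\Lambda=\prod_j x_j^{\lambda_j}$, $\deg(x^\Lambda)=\sum_j\lambda_j$, and let $\partial_k$ be the partial derivative with respect to $x_k$. $\mathfrak{L}(n)$ is the free $\mathbb{Z}$-module with basis $\mathcal{B}=\{x^\Lambda\partial_k : 1\le k\le n,\ \Lambda\in\mathrm{Part}(k-1)\}$, a Lie ring with bracket defined on basis elements by $[x^\Lambda\partial_k,x^\Theta\partial_j]=\partial_j(x^\Lambda)x^\Theta\partial_k$ if $j<k$, $-x^\Lambda\partial_k(x^\Theta)\partial_j$ if $j>k$, $0$ if $j=k$, extended bilinearly. A Lie subring is homogeneous if it is the $\mathbb{Z}$-span of a subset of $\mathcal{B}$. For an integer $i\ge-1$, let $r_i\in\{1,\dots,n-1\}$ with $i\equiv r_i\pmod{n-1}$ and $h_i=\lfloor (i-1)/(n-1)\rfloor+1$ (so $i=(h_i-1)(n-1)+r_i$). For a basis element define $\mathrm{WD}(x^\Lambda\partial_k)=\mathrm{wt}(\Lambda)-\deg(x^\Lambda)+n-k$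 and $\mathrm{lev}_i(x^\Lambda\partial_k)=h_i\,\mathrm{WD}(x^\Lambda\partial_k)+\deg(x^\Lambda)-1$. For $i\ge -1$, $\mathcal{N}_i=\{b\in\mathcal{B} : \mathrm{lev}_j(b)\le j \text{ for some integer } j \text{ with } -1\le j\le i\}$. The idealizer of a subring $\mathfrak{M}$ is $N_{\mathfrak{L}(n)}(\mathfrak{M})=\{y\in\mathfrak{L}(n): [y,m]\in\mathfrak{M}\ \forall m\in\mathfrak{M}\}$. Define $\mathfrak{N}_{-1}=\mathbb{Z}\partial_1+\dots+\mathbb{Z}\partial_n$ and $\mathfrak{N}_i=N_{\mathfrak{L}(n)}(\mathfrak{N}_{i-1})$ for $i\ge0$. *)

From HB Require Import structures.
From mathcomp Require Import all_boot all_order all_algebra.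
From mathcomp Require Import finmap.
From mathcomp.multinomials Require Import monalg.
Set Implicit Arguments. Unset Strict Implicit. Unset Printing Implicit Defensive.
Import Order.TTheory GRing.Theory Num.Theory.
Local Open Scope ring_scope.

(* A basis element x^Lambda d_k is encoded as a pair (k, lam) with
   1 <= k <= n and lam a list of length k-1 with  lam`_(j-1) = lambda_j
   (j = 1..k-1).  This is a canonical encoding of Part(k-1). *)
Definition valid (n : nat) (x : nat * seq nat) : bool :=
  (1 <= x.1 <= n)%N && (size x.2 == x.1.-1).

Definition Bas (n : nat) := {x : nat * seq nat | valid n x}.

Definition L (n : nat) := {malg int[Bas n]}.

Definition bk n (b : Bas n) : nat := (val b).1.
Definition blam n (b : Bas n) : seq nat := (val b).2.

Definition mkterm n (c : int) (x : nat * seq nat) : L n :=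
  if (insub x : option (Bas n)) is Some b then << c *g b >> else 0.

(* bracket on basis elements:
   [x^L d_k, x^T d_j] = d_j(x^L) x^T d_k  (j < k)
                     = - x^L d_k(x^T) d_j (j > k)
                     = 0                  (j = k) *)
Definition brb n (a b : Bas n) : L n :=
  let k := bk a in let lam := blam a in
  let j := bk b in let th := blam b in
  if (j < k)%N then
    mkterm n (nth 0 lam j.-1)%:Z
      (k, [seq (nth 0 lam i - (i == j.-1)) + nth 0 th i | i <- iota 0 k.-1])%N
  else if (k < j)%N then
    mkterm n (- (nth 0 th k.-1)%:Z)
      (j, [seq nth 0 lam i + (nth 0 th i - (i == k.-1)) | i <- iota 0 j.-1])%N
  else 0.

Definition bracket n (u v : L n) : L n :=
  \sum_(a <- msupp u) \sum_(b <- msupp v) (u@_a * v@_b) *: brb a b.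

Definition wt n (b : Bas n) : nat :=
  (\sum_(i < size (blam b)) i.+1 * nth 0 (blam b) i)%N.
Definition degb n (b : Bas n) : nat := sumn (blam b).
Definition WD n (b : Bas n) : int :=
  (wt b)%:Z - (degb b)%:Z + n%:Z - (bk b)%:Z.
(* h_i = floor((i-1)/(n-1)) + 1 ; intdiv's %/ is floor division for
   positive divisors *)
Definition hh (n : nat) (i : int) : int := ((i - 1) %/ (n.-1)%:Z)%Z + 1.
Definition lev n (i : int) (b : Bas n) : int :=
  hh n i * WD b + (degb b)%:Z - 1.

Definition Nset n (i : int) (b : Bas n) : Prop :=
  exists j : int, -1 <= j <= i /\ lev j b <= j.

Definition seteq n (A B : L n -> Prop) : Prop := forall v, A v <-> B v.

Definition span n (S : Bas n -> Prop) (v : L n) : Prop :=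
  exists s : seq (int * Bas n),
    (forall p, p \in s -> S p.2) /\ v = \sum_(p <- s) << p.1 *g p.2 >>.

Definition lie_subring n (A : L n -> Prop) : Prop :=
  [/\ A 0,
      forall u v, A u -> A v -> A (u - v)
    & forall u v, A u -> A v -> A (bracket u v)].

Definition homogeneous n (A : L n -> Prop) : Prop :=
  exists S : Bas n -> Prop, seteq A (span S).

Definition idealizer n (A : L n -> Prop) (y : L n) : Prop :=
  forall m, A m -> A (bracket y m).

Definition Mfrak n (i : int) : L n -> Prop := span (@Nset n i).

(* Nfrak n m  is  \mathfrak{N}_{m-1}:  Nfrak n 0 = Z d_1 + ... + Z d_n,
   Nfrak n m.+1 = idealizer (Nfrak n m). *)
Fixpoint Nfrak n (m : nat) : L n -> Prop :=
  match m with
  | 0 => span (fun b : Bas n => all (fun x => x == 0)%N (blam b))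
  | m'.+1 => idealizer (@Nfrak n m')
  end.

Arguments Mfrak n i _ : clear implicits.
Arguments Nfrak n m _ : clear implicits.

From Pilot Require Import Defs.
From HB Require Import structures.
From mathcomp Require Import all_boot all_order all_algebra.
From mathcomp Require Import finmap.
From mathcomp.multinomials Require Import monalg.
From mathcomp Require Import zify.
Import Order.TTheory GRing.Theory Num.Theory.
Local Open Scope ring_scope.
Set Implicit Arguments. Unset Strict Implicit.

(* Encode x^Lam d_k by its Laurent exponent Lam - e_k in Z^n.  The bracket of two
   basis elements is an integer multiple of the basis element whose exponent is
   the sum, and both WD - (n - 1) and deg - 1 are linear in the exponent, hence
   additive under brackets.  For i >= 0, membership in N_i is an explicit linear
   condition on (WD, deg - 1) which is stable under this addition when one
   factor lies in N_i and the other in N_(i-1); this gives [M_i, M_(i-1)] <= M_(i-1),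
   so M_i lies in the idealizer of M_(i-1) and is a subring.  Conversely, for a
   basis element b outside N_i, one of d_j or x_1^a x_(j-1) d_j is an m in N_(i-1)
   such that [b, m] is a nonzero multiple of a basis element outside N_(i-1); since
   distinct basis elements have distinct brackets with m, no element of the
   idealizer involves b.  Induction on i then identifies M_(i-1) with N_i. *)

Local Notation zspan := Defs.span.

Section ZSpan.
Variable n : nat.
Implicit Types (S T R : Bas n -> Prop) (u v : L n).

Lemma zspanP S v : zspan S v <-> (forall b, v@_b != 0 -> S b).
Proof.
split.
- case=> s [sS ->] b; rewrite raddf_sum /= => nz.
  have /hasP[p ps /eqP <-] : has (fun p : int * Bas n => p.2 == b) s.
    apply: contraNT nz => /hasPn s_b.
    rewrite big_seq big1 // => p ps.
    by rewrite mcoeffU (negbTE (s_b p ps)) mulr0n.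
  exact: sS.
- move=> vS; exists [seq (v@_b, b) | b <- msupp v]; split.
  + by move=> p /mapP [b bv ->]; apply: vS; rewrite mcoeff_neq0.
  + by rewrite big_map -monalgE.
Qed.

Lemma eq_zspan S T : (forall b, S b <-> T b) -> seteq (zspan S) (zspan T).
Proof. by move=> ST v; rewrite !zspanP; split=> vS b /vS /ST. Qed.

Lemma zspan0 S : zspan S 0.
Proof. by apply/zspanP => b; rewrite mcoeff0 eqxx. Qed.

Lemma zspanD S u v : zspan S u -> zspan S v -> zspan S (u + v).
Proof.
move=> /zspanP uS /zspanP vS; apply/zspanP => b; rewrite mcoeffD.
by have [->|/uS //] := eqVneq u@_b 0; rewrite add0r => /vS.
Qed.

Lemma zspanN S u : zspan S u -> zspan S (- u).
Proof. by move=> /zspanP uS; apply/zspanP => b; rewrite mcoeffN oppr_eq0 => /uS. Qed.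

Lemma zspanZ S c u : zspan S u -> zspan S (c *: u).
Proof.
by move=> /zspanP uS; apply/zspanP => b; rewrite mcoeffZ mulf_eq0 negb_or => /andP[_ /uS].
Qed.

Lemma zspanU S c g : S g -> zspan S << c *g g >>.
Proof.
move=> Sg; apply/zspanP => b; rewrite mcoeffU.
by case: (g =P b) => [<- //|_]; rewrite mulr0n eqxx.
Qed.

Lemma zspan_sum S (I : eqType) (r : seq I) (F : I -> L n) :
  (forall i, i \in r -> zspan S (F i)) -> zspan S (\sum_(i <- r) F i).
Proof.
elim: r => [|i r IHr] FS; first by rewrite big_nil; apply: zspan0.
rewrite big_cons; apply: zspanD; first by apply: FS; rewrite mem_head.
by apply: IHr => j jr; apply: FS; rewrite inE jr orbT.
Qed.

Lemma zspan_bracket S T R u v :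
  (forall a b, S a -> T b -> zspan R (brb a b)) ->
  zspan S u -> zspan T v -> zspan R (bracket u v).
Proof.
move=> ST_R /zspanP uS /zspanP vT.
apply: zspan_sum => a; rewrite -mcoeff_neq0 => /uS Sa.
apply: zspan_sum => b; rewrite -mcoeff_neq0 => /vT Tb.
exact/zspanZ/ST_R.
Qed.

End ZSpan.

Lemma seteq_trans n (A B C : L n -> Prop) : seteq A B -> seteq B C -> seteq A C.
Proof. by move=> AB BC v; rewrite AB BC. Qed.

Lemma eq_idealizer n (A B : L n -> Prop) : seteq A B -> seteq (idealizer A) (idealizer B).
Proof. by move=> AB y; split=> yA m /AB /yA /AB. Qed.

Lemma nth_map_iota (f : nat -> nat) k p :
  nth 0%N [seq f i | i <- iota 0 k] p = if (p < k)%N then f p else 0%N.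
Proof.
case: ltnP => pk; first by rewrite (nth_map 0%N) ?size_iota // nth_iota.
by rewrite nth_default // size_map size_iota.
Qed.

Lemma nth_neq0_of_sumn (s : seq nat) :
  sumn s != 0%N -> exists2 p, (p < size s)%N & nth 0%N s p != 0%N.
Proof.
elim: s => [//|x s IHs] /=; have [->|x_neq0] := eqVneq x 0%N; last by exists 0%N.
by rewrite add0n => /IHs [p ps nz]; exists p.+1.
Qed.

Lemma sum_nat_indicator (F : nat -> int) q k : (q < k)%N ->
  \sum_(0 <= p < k) F p * ((p == q) : nat)%:Z = F q.
Proof.
move=> qk; have := big_nat1_eq +%R F q 0 k; rewrite /= qk => <-.
by rewrite [RHS]big_mkcond; apply: eq_bigr => p _; case: eqP; rewrite ?mulr1 ?mulr0.
Qed.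

Lemma sum_nat_indicator1 q k : (q < k)%N -> \sum_(0 <= p < k) ((p == q) : nat)%:Z = 1.
Proof.
by move=> qk; rewrite -(sum_nat_indicator (fun=> 1) qk); apply: eq_bigr => p _; rewrite mul1r.
Qed.

Lemma sum_nat_widen0 (F : nat -> int) k m : (k <= m)%N ->
  (forall p, (k <= p)%N -> F p = 0) -> \sum_(0 <= p < m) F p = \sum_(0 <= p < k) F p.
Proof.
move=> km F0; rewrite (@big_cat_nat _ _ _ k 0 m _ _ (leq0n k) km) /=.
rewrite [X in _ + X]big1_seq ?addr0 //.
by move=> p /andP[_]; rewrite mem_index_iota => /andP[/F0].
Qed.

Section Basis.
Variable n : nat.
Implicit Types a b g m : Bas n.

Lemma bk_gt0 b : (0 < bk b)%N.
Proof. by have /andP[/andP[]] := valP b. Qed.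

Lemma bk_le b : (bk b <= n)%N.
Proof. by have /andP[/andP[]] := valP b. Qed.

Lemma size_blam b : size (blam b) = (bk b).-1.
Proof. by have /andP[_ /eqP] := valP b. Qed.

Lemma mkterm_valid c x (x_valid : valid n x) :
  mkterm n c x = << c *g (Sub x x_valid : Bas n) >>.
Proof. by rewrite /mkterm insubT. Qed.

(* The exponent vector of the Laurent monomial x^Lam / x_k. *)
Definition lexp b (p : nat) : int :=
  (nth 0%N (blam b) p)%:Z - ((p == (bk b).-1) : nat)%:Z.

Lemma lexp_inj a b : lexp a =1 lexp b -> a = b.
Proof.
move=> eq_ab.
have a_gt0 := bk_gt0 a; have b_gt0 := bk_gt0 b.
have sa := size_blam a; have sb := size_blam b.
have eq_k : bk a = bk b.
  have := eq_ab (bk a).-1; rewrite /lexp eqxx nth_default ?sa //.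
  by case: eqP => /=; lia.
have eq_lam : blam a = blam b.
  apply: (@eq_from_nth _ 0%N); first by rewrite sa sb eq_k.
  by move=> p _; have := eq_ab p; rewrite /lexp eq_k; lia.
apply: val_inj; move: eq_k eq_lam; rewrite /bk /blam.
by case: (val a) (val b) => ? ? [? ?] /= -> ->.
Qed.

Local Ltac eval_eqn := repeat match goal with
  |- context [nat_of_bool (?x == ?y)] =>
    first [ rewrite (_ : (x == y) = false); [| by apply/negP => /eqP; lia]
          | rewrite (_ : (x == y) = true); [| by apply/eqP; lia] ] end;
  rewrite /nat_of_bool /=.

(* The truncated subtraction in [brb] is exact as soon as the coefficient of
   the bracket is nonzero. *)
Lemma brb_bk_lt a m : (bk m < bk a)%N -> exists g,
  brb a m = << (nth 0%N (blam a) (bk m).-1)%:Z *g g >> /\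
  (nth 0%N (blam a) (bk m).-1 != 0%N -> lexp g =1 lexp a \+ lexp m).
Proof.
move=> lt_ma; rewrite /brb lt_ma; set x := (_, _).
have x_valid : valid n x by rewrite /valid /= size_map size_iota bk_gt0 bk_le eqxx.
exists (Sub x x_valid); split; first exact: mkterm_valid.
move=> nz p; rewrite /lexp /bk /blam /= -/(bk a) -/(blam a) -/(bk m) -/(blam m).
have := bk_gt0 m; have := size_blam a; have := size_blam m => sm sa m_gt0.
rewrite nth_map_iota; case: ltnP => pk.
- have [ep|] := eqVneq p (bk m).-1; last by eval_eqn; lia.
  by rewrite ep; eval_eqn; move: nz; rewrite -ep; case: (nth 0%N (blam a) p) => //; lia.
- rewrite !(@nth_default _ 0%N (blam a)) ?sa //.
  by rewrite !(@nth_default _ 0%N (blam m)) ?sm //; [eval_eqn; lia | lia].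
Qed.

Lemma brb_bk_gt a m : (bk a < bk m)%N -> exists g,
  brb a m = << - (nth 0%N (blam m) (bk a).-1)%:Z *g g >> /\
  (nth 0%N (blam m) (bk a).-1 != 0%N -> lexp g =1 lexp a \+ lexp m).
Proof.
move=> lt_am; rewrite /brb ltnNge (ltnW lt_am) /= lt_am; set x := (_, _).
have x_valid : valid n x by rewrite /valid /= size_map size_iota bk_gt0 bk_le eqxx.
exists (Sub x x_valid); split; first exact: mkterm_valid.
move=> nz p; rewrite /lexp /bk /blam /= -/(bk a) -/(blam a) -/(bk m) -/(blam m).
have := bk_gt0 a; have := size_blam a; have := size_blam m => sm sa a_gt0.
rewrite nth_map_iota; case: ltnP => pk.
- have [ep|] := eqVneq p (bk a).-1; last by eval_eqn; lia.
  by rewrite ep; eval_eqn; move: nz; rewrite -ep; case: (nth 0%N (blam m) p) => //; lia.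
- rewrite !(@nth_default _ 0%N (blam m)) ?sm //.
  by rewrite !(@nth_default _ 0%N (blam a)) ?sa //; [eval_eqn; lia | lia].
Qed.

Lemma brb_neq0_lt a m : (bk m < bk a)%N -> nth 0%N (blam a) (bk m).-1 != 0%N ->
  exists g, (brb a m)@_g != 0.
Proof. by move=> lt_ma nz; have [g [-> _]] := brb_bk_lt lt_ma; exists g; rewrite mcoeffUU. Qed.

Lemma brb_neq0_gt a m : (bk a < bk m)%N -> nth 0%N (blam m) (bk a).-1 != 0%N ->
  exists g, (brb a m)@_g != 0.
Proof.
by move=> lt_am nz; have [g [-> _]] := brb_bk_gt lt_am; exists g; rewrite mcoeffUU oppr_eq0.
Qed.

Lemma brb_bk_eq a m : bk a = bk m -> brb a m = 0.
Proof. by move=> eq_k; rewrite /brb eq_k ltnn. Qed.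

Lemma lexp_brb a m g : (brb a m)@_g != 0 -> lexp g =1 lexp a \+ lexp m.
Proof.
case: (ltngtP (bk m) (bk a)) => [lt_ma|lt_am|eq_k].
- have [g' [-> g'E]] := brb_bk_lt lt_ma; rewrite mcoeffU.
  by case: (g' =P g) => [<-|]; [rewrite mulr1n eqz_nat => /g'E | rewrite mulr0n eqxx].
- have [g' [-> g'E]] := brb_bk_gt lt_am; rewrite mcoeffU.
  by case: (g' =P g) => [<-|]; [rewrite mulr1n oppr_eq0 eqz_nat => /g'E | rewrite mulr0n eqxx].
- by rewrite brb_bk_eq // mcoeff0 eqxx.
Qed.

End Basis.

Section Weights.
Variable n : nat.
Implicit Types a b g m : Bas n.
Local Notation N := (n.-1)%:Z.

Lemma sum_blam b (f : nat -> nat -> int) : (forall p, f p 0%N = 0) ->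
  \sum_(0 <= p < n) f p (nth 0%N (blam b) p) =
  \sum_(0 <= p < size (blam b)) f p (nth 0%N (blam b) p).
Proof.
move=> f0; apply: sum_nat_widen0 => [|p sp]; last by rewrite nth_default.
by rewrite size_blam; have := bk_le b; lia.
Qed.

Lemma degb_sum b : (degb b)%:Z = \sum_(0 <= p < n) (nth 0%N (blam b) p)%:Z.
Proof.
rewrite (@sum_blam b (fun _ x => x%:Z)) // /degb sumnE (big_nth 0%N) -natz natr_sum.
by under eq_bigr do rewrite natz.
Qed.

Lemma WD_sum b : WD b = \sum_(0 <= p < n) p%:Z * (nth 0%N (blam b) p)%:Z + n%:Z - (bk b)%:Z.
Proof.
rewrite /WD.
have -> : (wt b)%:Z = \sum_(0 <= p < n) p%:Z * (nth 0%N (blam b) p)%:Z + (degb b)%:Z.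
  rewrite degb_sum -big_split /= (@sum_blam b (fun p x => p%:Z * x%:Z + x%:Z)); last first.
    by move=> p; rewrite mulr0.
  rewrite /wt -(big_mkord xpredT (fun i => i.+1 * nth 0 (blam b) i)%N) -natz natr_sum.
  by apply: eq_bigr => p _; rewrite natz PoszM -addn1 PoszD mulrDl mul1r.
lia.
Qed.

Lemma degb_lexp b : (degb b)%:Z - 1 = \sum_(0 <= p < n) lexp b p.
Proof.
have := bk_le b; have := bk_gt0 b => k_gt0 k_le.
by rewrite /lexp sumrB degb_sum sum_nat_indicator1 //; lia.
Qed.

Lemma WD_lexp b : WD b = \sum_(0 <= p < n) p%:Z * lexp b p + N.
Proof.
have := bk_le b; have := bk_gt0 b => k_gt0 k_le.
have -> : \sum_(0 <= p < n) p%:Z * lexp b p =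
          \sum_(0 <= p < n) p%:Z * (nth 0%N (blam b) p)%:Z - ((bk b).-1)%:Z.
  under eq_bigr do rewrite /lexp mulrBr.
  by rewrite sumrB (sum_nat_indicator (fun p => p%:Z)) //; lia.
by rewrite WD_sum !predn_int //; lia.
Qed.

Lemma WD_ge0 b : 0 <= WD b.
Proof.
have : 0 <= \sum_(0 <= p < n) p%:Z * (nth 0%N (blam b) p)%:Z by apply: sumr_ge0.
by rewrite WD_sum; have := bk_le b; lia.
Qed.

Lemma WD_le b : WD b <= ((bk b)%:Z - 2) * (degb b)%:Z + n%:Z - (bk b)%:Z.
Proof.
suff : \sum_(0 <= p < n) p%:Z * (nth 0%N (blam b) p)%:Z <=
       \sum_(0 <= p < n) ((bk b)%:Z - 2) * (nth 0%N (blam b) p)%:Z.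
  by rewrite WD_sum degb_sum mulr_sumr; lia.
apply: ler_sum => p _; case: (ltnP p (size (blam b))) => sp.
- by apply: ler_wpM2r => //; move: sp; rewrite size_blam; lia.
- by rewrite nth_default // !mulr0.
Qed.

Lemma WD_add_degb_le b : (degb b <= 1)%N -> WD b + (degb b)%:Z <= N.
Proof.
move=> d_le1; have := WD_le b; have := bk_gt0 b; have := bk_le b => k_le k_gt0.
rewrite predn_int; last lia.
have [->|->] : degb b = 0%N \/ degb b = 1%N by lia.
all: lia.
Qed.

Lemma WD_degb_lexp_add a m g : lexp g =1 lexp a \+ lexp m ->
  WD g = WD a + WD m - N /\ (degb g)%:Z - 1 = ((degb a)%:Z - 1) + ((degb m)%:Z - 1).
Proof.
move=> gE; rewrite !WD_lexp !degb_lexp; split.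
- under eq_bigr do rewrite gE mulrDr.
  rewrite big_split /=.
  set Wa := \sum_(0 <= p < n) p%:Z * lexp a p; set Wm := \sum_(0 <= p < n) p%:Z * lexp m p.
  lia.
- by under eq_bigr do rewrite gE; rewrite big_split.
Qed.

End Weights.

(* For N = n - 1 and A = i div N, the j in ((h - 1) N, h N] all have h_j = h, so
   b is in N_i (i >= 0) iff lev_j b <= j for j = 0, j = A N or j = i; with
   W = WD b and e = deg b - 1 this reads as follows (Nset_Ncond). *)
Definition Ncond (N A i W e : int) : Prop :=
  e <= 0 \/ e + A * W <= A * N \/ e + (A + 1) * W <= i.

Lemma divz_bounds (m d : int) : 0 < d -> (m %/ d)%Z * d <= m < ((m %/ d)%Z + 1) * d.
Proof.
move=> d_gt0; have := divz_eq m d; have := modz_ge0 m (lt0r_neq0 d_gt0).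
by have := ltz_pmod m d_gt0; lia.
Qed.

Lemma Ncond_dec N A i W e : Ncond N A i W e \/ ~ Ncond N A i W e.
Proof. rewrite /Ncond; lia. Qed.

Section NcondArith.
Variable N : int.
Hypothesis N_ge2 : 2 <= N.

Lemma Ncond_of_lev (A i W e h j : int) :
  0 <= A -> A * N <= i < (A + 1) * N -> 0 <= W -> -1 <= j <= i ->
  (h - 1) * N <= j - 1 < h * N -> h * W + e <= j -> Ncond N A i W e.
Proof.
rewrite /Ncond => *; have h_ge0 : 0 <= h by nia.
have h_le : h <= A + 1 by nia.
have [h_lt|h_ge] := ltrP h (A + 1); last by right; right; nia.
by case: (lerP W N) => ?; [right; left | left]; nia.
Qed.

Lemma Ncond_add (A A' i Wb eb Wm em : int) : 1 <= i -> 0 <= A' ->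
  A * N <= i < (A + 1) * N -> A' * N <= i - 1 < (A' + 1) * N ->
  0 <= Wb -> 0 <= Wm -> 0 <= Wb + Wm - N -> -1 <= eb -> -1 <= em ->
  (eb <= 0 -> Wb + eb <= N - 1) -> (em <= 0 -> Wm + em <= N - 1) ->
  Ncond N A i Wb eb -> Ncond N A' (i - 1) Wm em ->
  Ncond N A' (i - 1) (Wb + Wm - N) (eb + em).
Proof.
rewrite /Ncond => ? ? ? ? ? ? ? ? ? Wb_small Wm_small hb hm.
have cb : (eb <= 0 /\ Wb + eb <= N - 1) \/ 1 <= eb.
  by case: (lerP eb 0) => ?; [left; split=> //; apply: Wb_small | right; lia].
have cm : (em <= 0 /\ Wm + em <= N - 1) \/ 1 <= em.
  by case: (lerP em 0) => ?; [left; split=> //; apply: Wm_small | right; lia].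
have [eA|eA] : A = A' \/ A = A' + 1 by nia.
all: subst A; case: cb hb => [[? ?]|?] [?|[?|?]]; case: cm hm => [[? ?]|?] [?|[?|?]]; nia.
Qed.

Lemma Ncond_shift (A A' i W e : int) : 1 <= i -> 0 <= A' ->
  A * N <= i < (A + 1) * N -> A' * N <= i - 1 < (A' + 1) * N -> 0 <= W ->
  ~ Ncond N A i W e -> ~ Ncond N A' (i - 1) (W - 1) (e + A').
Proof.
rewrite /Ncond => ? ? ? ? ? hb [?|[?|?]]; apply: hb; first nia.
all: have [eA|eA] : A = A' \/ A = A' + 1 by nia.
all: by subst A; case: (lerP W N) => ?; nia.
Qed.

Lemma Ncond_shift0 (A A' i e : int) : 1 <= i -> 0 <= A' ->
  A * N <= i < (A + 1) * N -> A' * N <= i - 1 < (A' + 1) * N ->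
  ~ Ncond N A i 0 e -> ~ Ncond N A' (i - 1) 0 (e - 1).
Proof. by rewrite /Ncond => ? ? ? ? hb [?|[?|?]]; apply: hb; nia. Qed.

End NcondArith.

Lemma Nset_mono n (i i' : int) (b : Bas n) : i <= i' -> Nset i b -> Nset i' b.
Proof.
by move=> ii' [j [/andP[j_ge j_le] lev_j]]; exists j; split=> //; apply/andP; split; lia.
Qed.

Section Levels.
Variable n : nat.
Hypothesis n_ge3 : (3 <= n)%N.
Implicit Types b : Bas n.
Local Notation N := (n.-1)%:Z.

Lemma N_ge2 : 2 <= N.
Proof. lia. Qed.

Lemma floorN_bounds (i : int) : (i %/ N)%Z * N <= i < ((i %/ N)%Z + 1) * N.
Proof. by apply: divz_bounds; lia. Qed.

Lemma hh_bounds (j : int) : (hh n j - 1) * N <= j - 1 < hh n j * N.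
Proof. by rewrite /hh addrK floorN_bounds. Qed.

Lemma hh0 (j : int) : -1 <= j <= 0 -> hh n j = 0.
Proof. by have := hh_bounds j; have := N_ge2; nia. Qed.

Lemma Ncond_of_Nset (i : int) b : 0 <= i ->
  Nset i b -> Ncond N (i %/ N)%Z i (WD b) ((degb b)%:Z - 1).
Proof.
move=> i_ge0 [j [j_range lev_j]]; have := floorN_bounds i; have := N_ge2 => N2 iA.
apply: (Ncond_of_lev N2 _ iA (WD_ge0 b) j_range (hh_bounds j)); first by nia.
by move: lev_j; rewrite /lev; lia.
Qed.

Lemma Nset_of_Ncond (i : int) b : 0 <= i ->
  Ncond N (i %/ N)%Z i (WD b) ((degb b)%:Z - 1) -> Nset i b.
Proof.
move=> i_ge0; have := floorN_bounds i; have := N_ge2 => N2.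
set A := (i %/ N)%Z => iA; have A_ge0 : 0 <= A by nia.
have W_ge0 := WD_ge0 b.
have Nset_at j : -1 <= j <= i -> hh n j * WD b + (degb b)%:Z - 1 <= j -> Nset i b.
  by move=> ? ?; exists j.
have Nset_e_le0 : (degb b)%:Z - 1 <= 0 -> Nset i b.
  by move=> ?; apply: (Nset_at 0); rewrite ?hh0 //; lia.
case=> [//|[blockA|blocki]]; first have [A0|A_gt0] := eqVneq A 0.
- by apply: Nset_e_le0; move: blockA; rewrite A0; lia.
- apply: (Nset_at (A * N)); first by apply/andP; split; nia.
  have := hh_bounds (A * N) => hAN.
  have -> : hh n (A * N) = A by nia.
  lia.
- apply: (Nset_at i); first lia.
  have : hh n i <= A + 1 by have := hh_bounds i; nia.
  by nia.
Qed.

Lemma Nset_Ncond (i : int) b : 0 <= i ->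
  Nset i b <-> Ncond N (i %/ N)%Z i (WD b) ((degb b)%:Z - 1).
Proof. by move=> i_ge0; split; [apply: Ncond_of_Nset | apply: Nset_of_Ncond]. Qed.

Lemma Nset_m1 b : Nset (-1) b <-> degb b = 0%N.
Proof.
split=> [[j [j_range]]|d0]; last by exists (-1); rewrite /lev hh0 ?d0; lia.
have -> : j = -1 by lia.
by rewrite /lev hh0 //; lia.
Qed.

Lemma Nset0 b : Nset 0 b <-> (degb b <= 1)%N.
Proof.
split=> [[j [j_range]]|d_le1]; last by exists 0; rewrite /lev hh0 //; lia.
by rewrite /lev hh0 //; lia.
Qed.

Lemma Nset_dec (i : int) b : 0 <= i -> Nset i b \/ ~ Nset i b.
Proof. by move=> i_ge0; rewrite Nset_Ncond //; apply: Ncond_dec. Qed.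

End Levels.

Section Closure.
Variable n : nat.
Hypothesis n_ge3 : (3 <= n)%N.
Implicit Types a b g m : Bas n.

Lemma Nset_lexp_add (i : int) a m g : 0 <= i -> lexp g =1 lexp a \+ lexp m ->
  Nset i a -> Nset (i - 1) m -> Nset (i - 1) g.
Proof.
move=> i_ge0 gE a_in m_in; have [WDg degg] := WD_degb_lexp_add gE.
have [i0|i_neq0] := eqVneq i 0.
  move: a_in m_in; rewrite i0 sub0r Nset0 // !Nset_m1 // => a_le1 dm.
  by move: degg; rewrite dm; lia.
have N2 := N_ge2 n_ge3; have iA := floorN_bounds n_ge3 i.
have iA' := floorN_bounds n_ge3 (i - 1); have A'_ge0 : 0 <= ((i - 1) %/ (n.-1)%:Z)%Z by nia.
have i1_ge0 : 0 <= i - 1 by lia.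
move: a_in m_in; rewrite !Nset_Ncond // WDg degg => a_in m_in.
apply: (Ncond_add N2 _ A'_ge0 iA iA') a_in m_in; rewrite -?WDg ?WD_ge0 //; try lia.
all: by have := @WD_add_degb_le _ a; have := @WD_add_degb_le _ m; lia.
Qed.

Lemma zspan_brb_Nset (i : int) a m : 0 <= i ->
  Nset i a -> Nset (i - 1) m -> zspan (Nset (i - 1)) (brb a m).
Proof.
move=> i_ge0 a_in m_in; apply/zspanP => g /lexp_brb gE.
exact: Nset_lexp_add gE a_in m_in.
Qed.

End Closure.

Definition dpart_code (j : nat) : nat * seq nat := (j, nseq j.-1 0%N).

(* x_1^a x_(j-1) d_j *)
Definition xmon_code (a j : nat) : nat * seq nat :=
  (j, [seq a * (q == 0) + (q == j.-2) | q <- iota 0 j.-1])%N.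

Section Witnesses.
Variable n : nat.
Hypothesis n_ge3 : (3 <= n)%N.
Implicit Types b m : Bas n.
Local Notation N := (n.-1)%:Z.

Lemma dpart_props j (j_valid : valid n (dpart_code j)) :
  let m : Bas n := Sub _ j_valid in [/\ bk m = j, degb m = 0%N & WD m = n%:Z - j%:Z].
Proof.
split=> //; first by rewrite /degb /= sumn_nseq.
by rewrite WD_sum big1 ?add0r // => q _; rewrite /blam /= nth_nseq; case: ifP; rewrite mulr0.
Qed.

Lemma xmon_props a j (j_valid : valid n (xmon_code a j)) : (2 <= j)%N ->
  let m : Bas n := Sub _ j_valid in
  [/\ bk m = j, nth 0%N (blam m) j.-2 != 0%N, (degb m)%:Z = a%:Z + 1 & WD m = N - 1].
Proof.
move=> j_ge2 m; have /andP[/andP[_ /= j_le] _] := j_valid.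
have lamE q : nth 0%N (blam m) q = (a * (q == 0) + (q == j.-2))%N.
  rewrite /blam /= nth_map_iota; case: ltnP => // qj.
  have [q_neq0 q_neq] : q != 0%N /\ q != j.-2 by split; apply/eqP; lia.
  by rewrite (negbTE q_neq0) (negbTE q_neq) muln0.
split=> //; first by rewrite lamE eqxx addn1.
- rewrite degb_sum; under eq_bigr do rewrite lamE PoszD PoszM.
  rewrite big_split /= (sum_nat_indicator (fun=> a%:Z)); last lia.
  by rewrite sum_nat_indicator1; last lia.
- rewrite WD_sum; under eq_bigr do rewrite lamE PoszD PoszM mulrDr mulrA.
  rewrite big_split /= (sum_nat_indicator (fun q => q%:Z * a%:Z)); last lia.
  rewrite (sum_nat_indicator (fun q => q%:Z)); last lia.
  by rewrite mul0r add0r (_ : bk m = j) // predn_int; lia.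
Qed.

Lemma degb_gt1_notin (i : int) b : 0 <= i -> ~ Nset i b -> (1 < degb b)%N.
Proof.
move=> i_ge0 b_notin; rewrite ltnNge; apply/negP => d_le1.
by apply/b_notin/(Nset_mono i_ge0); apply/Nset0.
Qed.

(* m in N_(i-1) whose bracket with b leaves M_(i-1): b occurs in no element of
   the idealizer of M_(i-1). *)
Definition witness (i : int) b m : Prop :=
  Nset (i - 1) m /\ exists2 g, (brb b m)@_g != 0 & ~ Nset (i - 1) g.

Lemma witness0 b m : ~ Nset 0 b -> degb m = 0%N ->
  (exists g, (brb b m)@_g != 0) -> witness 0 b m.
Proof.
move=> b_notin dm [g nz]; have [_ degg] := WD_degb_lexp_add (lexp_brb nz).
rewrite /witness sub0r Nset_m1 //; split=> //; exists g => // /(Nset_m1 n_ge3) dg.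
by apply: b_notin; rewrite Nset0 //; move: degg; rewrite dg dm; lia.
Qed.

Lemma witness_xmon (i : int) b m : 1 <= i -> ~ Nset i b ->
  WD m = N - 1 -> (degb m)%:Z = ((i - 1) %/ N)%Z + 1 ->
  (exists g, (brb b m)@_g != 0) -> witness i b m.
Proof.
move=> i_ge1 b_notin Wm dm [g nz]; have [WDg degg] := WD_degb_lexp_add (lexp_brb nz).
have N2 := N_ge2 n_ge3; have iA := floorN_bounds n_ge3 i.
have iA' := floorN_bounds n_ge3 (i - 1); set A' := ((i - 1) %/ N)%Z in iA' dm *.
have A'_ge0 : 0 <= A' by nia.
have i1_ge0 : 0 <= i - 1 by lia.
move: b_notin; rewrite /witness !Nset_Ncond //; last lia; move=> b_notin.
split; first by rewrite Wm dm /Ncond; right; left; nia.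
exists g => //; rewrite Nset_Ncond //.
rewrite WDg degg Wm dm (_ : WD b + (N - 1) - N = WD b - 1); last lia.
rewrite (_ : A' + 1 - 1 = A'); last lia.
exact: Ncond_shift iA iA' (WD_ge0 b) b_notin.
Qed.

Lemma witness_dpart1 (i : int) b m : 1 <= i -> ~ Nset i b -> WD b = 0 ->
  WD m = N -> degb m = 0%N -> (exists g, (brb b m)@_g != 0) -> witness i b m.
Proof.
move=> i_ge1 b_notin Wb Wm dm [g nz]; have [WDg degg] := WD_degb_lexp_add (lexp_brb nz).
have N2 := N_ge2 n_ge3; have iA := floorN_bounds n_ge3 i.
have iA' := floorN_bounds n_ge3 (i - 1); have A'_ge0 : 0 <= ((i - 1) %/ N)%Z by nia.
split; first by apply: (@Nset_mono _ (-1)); [lia | apply/Nset_m1].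
have i1_ge0 : 0 <= i - 1 by lia.
exists g => //; move: b_notin; rewrite !Nset_Ncond //; last lia.
rewrite WDg degg Wm Wb dm (_ : 0 + N - N = 0); last lia.
rewrite (_ : (degb b)%:Z - 1 + ((0%N)%:Z - 1) = (degb b)%:Z - 1 - 1); last lia.
exact: Ncond_shift0.
Qed.

Lemma floorN_nat (i : int) : 0 <= i -> exists a : nat, a%:Z = (i %/ N)%Z.
Proof. by move=> i_ge0; exists `|(i %/ N)%Z|%N; rewrite gez0_abs // divz_ge0 //; lia. Qed.

Lemma exists_witness0 b : ~ Nset 0 b -> exists m, witness 0 b m.
Proof.
move=> b_notin; have d_gt1 := degb_gt1_notin (lexx 0) b_notin.
have [p p_lt nz] : exists2 p, (p < size (blam b))%N & nth 0%N (blam b) p != 0%N.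
  by apply: nth_neq0_of_sumn; rewrite -lt0n; move: d_gt1; rewrite /degb; lia.
move: p_lt; rewrite size_blam => p_lt.
have m_valid : valid n (dpart_code p.+1).
  by rewrite /valid /= size_nseq eqxx andbT; have := bk_le b; lia.
have [bk_m dm _] := dpart_props m_valid.
exists (Sub _ m_valid); apply: witness0 => //.
by apply: brb_neq0_lt; rewrite bk_m //; lia.
Qed.

Lemma witness_bk_lt (i : int) b : 1 <= i -> ~ Nset i b -> (bk b < n)%N ->
  exists m, witness i b m.
Proof.
move=> i_ge1 b_notin lt_kn.
have [a aE] : exists a : nat, a%:Z = ((i - 1) %/ N)%Z by apply: floorN_nat; lia.
have m_valid : valid n (xmon_code a (bk b).+1).
  by rewrite /valid /= size_map size_iota eqxx andbT; lia.
have [bk_m nz dm Wm] := xmon_props m_valid (bk_gt0 b).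
exists (Sub _ m_valid); apply: witness_xmon => //; first by rewrite dm aE.
by apply: brb_neq0_gt nz; rewrite bk_m.
Qed.

Lemma witness_mid (i : int) b p : 1 <= i -> ~ Nset i b -> (0 < p)%N -> (p.+1 < bk b)%N ->
  nth 0%N (blam b) p != 0%N -> exists m, witness i b m.
Proof.
move=> i_ge1 b_notin p_gt0 p_lt nz.
have [a aE] : exists a : nat, a%:Z = ((i - 1) %/ N)%Z by apply: floorN_nat; lia.
have m_valid : valid n (xmon_code a p.+1).
  by rewrite /valid /= size_map size_iota eqxx andbT; have := bk_le b; lia.
have [bk_m _ dm Wm] := xmon_props m_valid p_gt0.
exists (Sub _ m_valid); apply: witness_xmon => //; first by rewrite dm aE.
by apply: brb_neq0_lt; rewrite bk_m.
Qed.

Lemma witness_x1 (i : int) b : 1 <= i -> ~ Nset i b -> bk b = n ->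
  (forall p, (0 < p)%N -> nth 0%N (blam b) p = 0%N) -> exists m, witness i b m.
Proof.
move=> i_ge1 b_notin k_n lam0.
have d_gt1 : (1 < degb b)%N by apply: degb_gt1_notin b_notin; lia.
have Wb : WD b = 0.
  rewrite WD_sum big1 ?add0r ?k_n; first lia.
  by case=> [|p] _; rewrite ?mul0r // lam0 // mulr0.
have nz : nth 0%N (blam b) 0 != 0%N.
  apply/eqP => lam00; move: d_gt1; rewrite -ltz_nat degb_sum big1 //.
  by case=> [|p] _; rewrite ?lam00 ?lam0.
have m_valid : valid n (dpart_code 1) by rewrite /valid /=; lia.
have [bk_m dm Wm] := dpart_props m_valid.
exists (Sub _ m_valid); apply: witness_dpart1 => //; first by rewrite Wm predn_int; lia.
by apply: brb_neq0_lt; rewrite bk_m ?k_n //; lia.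
Qed.

Lemma exists_witness (i : nat) b : ~ Nset i%:Z b -> exists m, witness i%:Z b m.
Proof.
case: i => [|i] b_notin; first exact: exists_witness0.
have i_ge1 : 1 <= i.+1%:Z by [].
have [lt_kn|ge_kn] := ltnP (bk b) n; first exact: witness_bk_lt.
have k_n : bk b = n by have := bk_le b; lia.
have [/hasP[p]|/hasPn x1_only] :=
  boolP (has (fun p => nth 0%N (blam b) p != 0%N) (iota 1 n.-2)).
  by rewrite mem_iota => /andP[p_gt0 p_lt]; apply: witness_mid => //; lia.
apply: witness_x1 => // p p_gt0; apply/eqP; case: (ltnP p n.-1) => p_lt.
  by have := x1_only p; rewrite mem_iota negbK; apply; lia.
by rewrite nth_default // size_blam k_n.
Qed.

End Witnesses.

(* Only b contributes, since brb a m and brb b m share a basis element only if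
   lexp a = lexp b. *)
Lemma coef_bracket_monalgU n (y : L n) b m g : y@_b != 0 -> (brb b m)@_g != 0 ->
  (bracket y << 1 *g m >>)@_g = y@_b * (brb b m)@_g.
Proof.
move=> yb nz; rewrite /bracket msuppU oner_eq0 raddf_sum /=.
under eq_bigr do rewrite big_seq_fset1 mcoeffUU mulr1 mcoeffZ.
rewrite (bigD1_seq b) /= ?fset_uniq -?mcoeff_neq0 // big1 ?addr0 // => a a_neq_b.
have [->|nz'] := eqVneq (brb a m)@_g 0; first by rewrite mulr0.
suff a_eq_b : a = b by rewrite a_eq_b eqxx in a_neq_b.
by apply: lexp_inj => p; move: (lexp_brb nz p) (lexp_brb nz' p) => /=; lia.
Qed.

Section Idealizer.
Variable n : nat.
Hypothesis n_ge3 : (3 <= n)%N.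

Lemma Mfrak_sub_idealizer (i : int) (y : L n) : 0 <= i ->
  Mfrak n i y -> idealizer (Mfrak n (i - 1)) y.
Proof.
by move=> i_ge0 y_in m m_in; apply: zspan_bracket y_in m_in => a b; apply: zspan_brb_Nset.
Qed.

Lemma idealizer_sub_Mfrak (i : nat) (y : L n) :
  idealizer (Mfrak n (i%:Z - 1)) y -> Mfrak n i%:Z y.
Proof.
move=> y_ideal; apply/zspanP => b yb.
have [//|b_notin] := Nset_dec n_ge3 b (le0z_nat i); exfalso.
have [m [m_in [g nz]]] := exists_witness n_ge3 b_notin; apply.
have /zspanP := y_ideal _ (zspanU 1 m_in); apply.
by rewrite (coef_bracket_monalgU yb nz) mulf_neq0.
Qed.

Lemma Mfrak_idealizer (i : nat) : seteq (Mfrak n i%:Z) (idealizer (Mfrak n (i%:Z - 1))).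
Proof. by move=> y; split; [apply: Mfrak_sub_idealizer | apply: idealizer_sub_Mfrak]. Qed.

Lemma Mfrak_Nfrak (i : nat) : seteq (Mfrak n (i%:Z - 1)) (Nfrak n i).
Proof.
elim: i => [|i IHi].
  apply: eq_zspan => b; rewrite sub0r Nset_m1 // /degb.
  by split=> [/eqP/natnseq0P/all_pred1P | /all_pred1P/natnseq0P/eqP].
rewrite (_ : i.+1%:Z - 1 = i%:Z); last lia.
exact: seteq_trans (Mfrak_idealizer i) (eq_idealizer IHi).
Qed.

Lemma Mfrak_lie_subring (i : int) : -1 <= i -> lie_subring (Mfrak n i).
Proof.
move=> i_ge; split; first exact: zspan0.
  by move=> u v u_in v_in; apply/zspanD/zspanN.
move=> u v; apply: zspan_bracket => a b a_in b_in.
have := @zspan_brb_Nset n n_ge3 (i + 1) a b; rewrite addrK; apply=> //; first lia.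
by apply: Nset_mono a_in; lia.
Qed.

End Idealizer.

Theorem theorem3p4 (n : nat) (hn : (3 <= n)%N) :
  (forall i : int, -1 <= i ->
     lie_subring (Mfrak n i) /\ homogeneous (Mfrak n i)) /\
  (forall i : nat,
     seteq (Mfrak n i%:Z) (idealizer (Mfrak n (i%:Z - 1))) /\
     seteq (idealizer (Mfrak n (i%:Z - 1))) (Nfrak n i.+1)).
Proof.
split=> [i i_ge | i].
  by split; [exact: Mfrak_lie_subring | exists (@Nset n i)].
split; first exact: Mfrak_idealizer.
exact/eq_idealizer/Mfrak_Nfrak.
Qed.
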